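(* Let $n\ge 2$ and let $\lvert\psi\rangle\in(\mathbb{C}^d)^{\otimes n}$ be a unit vector with Schmidt decomposition across qudit $1$ versus qudits $2,\ldots,n$ given by $\lvert\psi\rangle=\sum_{i=1}^d\alpha_i\lvert w_i\rangle\lvert v_i\rangle$, where $\alpha_i\ge0$, $\{\lvert w_i\rangle\}\subseteq\mathbb{C}^d$ and $\{\lvert v_i\rangle\}\subseteq(\mathbb{C}^d)^{\otimes n-1}$ are orthonormal sets. Define $\rho:=\sum_{i=1}^d\alpha_i^2\,\lvert w_i\rangle\langle w_i\rvert\otimes\lvert v_i\rangle\langle v_i\rvert$. Let $\Pi$ be a projector acting on some subset $\mathcal{S}\subseteq\{1,\ldots,n\}$ of the qudits (i.e. a projector on the qudits in $\mathcal{S}$ tensored with the identity on the others). If $\Pi$ crosses the Schmidt cut, i.e. $1\in\mathcal{S}$ and $\mathcal{S}\cap\{2,\ldots,n\}\neq\emptyset$, then $\mathrm{Tr}(\Pi\rho)\ge\frac1d\mathrm{Tr}(\Pi\lvert\psi\rangle\langle\psi\rvert)$. Otherwise $\mathrm{Tr}(\Pi\rho)=\mathrm{Tr}(\Pi\lvert\psi\rangle\langle\psi\rvert)$. *)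

From HB Require Import structures.
From mathcomp Require Import all_boot all_order all_algebra.
Set Implicit Arguments. Unset Strict Implicit. Unset Printing Implicit Defensive.
Import Order.TTheory GRing.Theory Num.Theory.
Local Open Scope ring_scope.

Section QuditDefs.
Variables (C : numClosedFieldType) (d : nat).

(* Basis labels of (C^d)^{(x) k}: a digit in 'I_d for each of the k qudits. *)
Definition conf (k : nat) := {ffun 'I_k -> 'I_d}.

(* The labels of qudits 2..n (in the paper's 1-based numbering) of a
   configuration of m.+1 qudits; qudit 1 is ord0. *)
Definition tailc (m : nat) (x : conf m.+1) : conf m := [ffun j => x (lift ord0 j)].

Definition restr (k : nat) (S : {set 'I_k}) (x : conf k) :
  {ffun {i : 'I_k | i \in S} -> 'I_d} := [ffun j => x (val j)].

Definition orthonormal_fam (T : finType) (f : 'I_d -> T -> C) : Prop :=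
  forall i j : 'I_d, \sum_(t : T) f i t * Num.conj (f j t) = (i == j)%:R.

Definition is_projector (T : finType) (P : T -> T -> C) : Prop :=
  (forall a b, P a b = Num.conj (P b a)) /\
  (forall a b, \sum_(c : T) P a c * P c b = P a b).

(* Pi = P (x) Id : P acts on the qudits in S, identity on the others. *)
Definition lift_op (k : nat) (S : {set 'I_k})
  (P : {ffun {i : 'I_k | i \in S} -> 'I_d} -> {ffun {i : 'I_k | i \in S} -> 'I_d} -> C)
  (x y : conf k) : C :=
  P (restr S x) (restr S y) * [forall j, (j \notin S) ==> (x j == y j)]%:R.

Definition trace_prod (T : finType) (A B : T -> T -> C) : C :=
  \sum_(x : T) \sum_(y : T) A x y * B y x.

Definition ketbra (T : finType) (psi : T -> C) (x y : T) : C :=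
  psi x * Num.conj (psi y).

Definition rho_of (m : nat) (alpha : 'I_d -> C) (w : 'I_d -> 'I_d -> C)
  (v : 'I_d -> conf m -> C) (x y : conf m.+1) : C :=
  \sum_(i : 'I_d) alpha i ^+ 2 * (w i (x ord0) * Num.conj (w i (y ord0)))
                   * (v i (tailc x) * Num.conj (v i (tailc y))).

End QuditDefs.

(* Write psi = sum_i u_i with u_i := alpha_i w_i (x) v_i, so that rho = sum_i |u_i><u_i|
   and Tr(Pi |psi><psi|) = sum_(i,j) Tr(Pi |u_i><u_j|).  Since Pi is a projector,
   0 <= sum_(i,j) Tr(Pi |u_i - u_j><u_i - u_j|) = 2 (d Tr(Pi rho) - Tr(Pi |psi><psi|)),
   which is the first claim.  If Pi does not cross the cut, it acts as the identity
   on qudit 1 or on qudits 2..n; the off-diagonal terms Tr(Pi |u_i><u_j|) then carry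
   the factor <w_j|w_i> or <v_j|v_i> and vanish, which gives the equality. *)
From HB Require Import structures.
From mathcomp Require Import all_boot all_order all_algebra.
From mathcomp Require Import ring.
Import Order.TTheory GRing.Theory Num.Theory.
Local Open Scope ring_scope.
Set Implicit Arguments. Unset Strict Implicit. Unset Printing Implicit Defensive.

Lemma sumr_delta (C : nzRingType) (I : finType) (a : I) (F : I -> C) :
  \sum_b (a == b)%:R * F b = F a.
Proof.
rewrite (bigD1 a) //= eqxx mul1r big1 ?addr0 // => b /negbTE.
by rewrite eq_sym => ->; rewrite mul0r.
Qed.

Section TraceForms.
Variables (C : numClosedFieldType) (T : finType).
Implicit Types (Q A B : T -> T -> C) (f g : T -> C).

Definition outer f g (x y : T) : C := f x * Num.conj (g y).

Lemma eq_trace_prod Q A B :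
  (forall x y, A x y = B x y) -> trace_prod Q A = trace_prod Q B.
Proof.
by move=> eqAB; apply: eq_bigr => x _; apply: eq_bigr => y _; rewrite eqAB.
Qed.

Lemma trace_prod_sumr (I : finType) Q (A : I -> T -> T -> C) :
  trace_prod Q (fun x y => \sum_i A i x y) = \sum_i trace_prod Q (A i).
Proof.
rewrite /trace_prod.
under eq_bigr do under eq_bigr do rewrite mulr_sumr.
under eq_bigr do rewrite exchange_big.
by rewrite exchange_big.
Qed.

Lemma trace_ketbra_ge0 Q f : is_projector Q -> 0 <= trace_prod Q (ketbra f).
Proof.
case=> herm idem.
suff -> : trace_prod Q (ketbra f) =
    \sum_c (\sum_y Q c y * f y) * Num.conj (\sum_x Q c x * f x).
  by apply: sumr_ge0 => c _; apply: mul_conjC_ge0.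
rewrite /trace_prod /ketbra.
transitivity (\sum_x \sum_y \sum_c Q x c * Q c y * (f y * Num.conj (f x))).
  apply: eq_bigr => x _; apply: eq_bigr => y _.
  by rewrite -(idem x y) mulr_suml.
transitivity (\sum_c \sum_x \sum_y Q x c * Q c y * (f y * Num.conj (f x))).
  under eq_bigr do rewrite exchange_big.
  by rewrite exchange_big.
apply: eq_bigr => c _; rewrite exchange_big /= rmorph_sum mulr_suml.
apply: eq_bigr => y _; rewrite mulr_sumr; apply: eq_bigr => x _.
by rewrite rmorphM /= -herm; ring.
Qed.

Lemma trace_ketbraB Q f g :
  trace_prod Q (ketbra (fun x => f x - g x)) =
  trace_prod Q (outer f f) - trace_prod Q (outer f g)
  - trace_prod Q (outer g f) + trace_prod Q (outer g g).
Proof.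
rewrite /trace_prod -!sumrB -big_split; apply: eq_bigr => x _.
rewrite -!sumrB -big_split; apply: eq_bigr => y _.
by rewrite /ketbra /outer rmorphB /=; ring.
Qed.

Lemma trace_ketbra_sum (I : finType) Q (u : I -> T -> C) :
  trace_prod Q (ketbra (fun x => \sum_i u i x)) =
  \sum_i \sum_j trace_prod Q (outer (u i) (u j)).
Proof.
transitivity (trace_prod Q (fun x y => \sum_i \sum_j outer (u i) (u j) x y)).
  apply: eq_trace_prod => x y; rewrite /ketbra rmorph_sum mulr_suml.
  by apply: eq_bigr => i _; rewrite mulr_sumr.
by rewrite trace_prod_sumr; apply: eq_bigr => i _; apply: trace_prod_sumr.
Qed.

Lemma trace_ketbra_sum_le (I : finType) Q (u : I -> T -> C) :
  is_projector Q ->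
  trace_prod Q (ketbra (fun x => \sum_i u i x)) <=
  #|I|%:R * \sum_i trace_prod Q (ketbra (u i)).
Proof.
move=> hQ.
have diffs_ge0 : 0 <= \sum_i \sum_j trace_prod Q (ketbra (fun x => u i x - u j x)).
  by apply: sumr_ge0 => i _; apply: sumr_ge0 => j _; apply: trace_ketbra_ge0.
have sum_const2l (F : I -> C) : \sum_i \sum_(j : I) F i = #|I|%:R * \sum_i F i.
  by rewrite mulr_sumr; apply: eq_bigr => i _; rewrite sumr_const mulr_natl.
have sum_const2r (F : I -> C) : \sum_(i : I) \sum_j F j = #|I|%:R * \sum_i F i.
  by rewrite sumr_const mulr_natl.
move: diffs_ge0.
under eq_bigr do under eq_bigr do rewrite trace_ketbraB.
under eq_bigr do rewrite big_split /= !sumrB /=.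
rewrite big_split /= !sumrB /= sum_const2l sum_const2r.
rewrite [in X in _ - X + _]exchange_big /= trace_ketbra_sum.
have -> (a b : C) : a - b - b + a = 2 * (a - b) by ring.
by rewrite pmulr_rge0 ?ltr0n // subr_ge0.
Qed.

End TraceForms.

Section LiftedProjector.
Variables (C : numClosedFieldType) (d k : nat) (S : {set 'I_k}).
Implicit Types (x y : conf d k) (h : {ffun {i : 'I_k | i \in S} -> 'I_d}).

Definition agree x y := [forall j, (j \notin S) ==> (x j == y j)].

(* The configuration equal to h on S and to x off S. *)
Definition glue x h : conf d k := [ffun j => odflt (x j) (omap h (insub j))].

Lemma restr_glue x h : restr S (glue x h) = h.
Proof. by apply/ffunP => s; rewrite !ffunE valK. Qed.

Lemma glue_out x h j : j \notin S -> glue x h j = x j.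
Proof. by move=> jS; rewrite ffunE insubN. Qed.

Lemma glue_restr x y : agree x y -> glue x (restr S y) = y.
Proof.
move=> /forallP xy; apply/ffunP => j; rewrite ffunE.
case: insubP => [s _ <-|jS] /=; first by rewrite ffunE.
by apply/eqP; move/implyP: (xy j); apply.
Qed.

Lemma agree_glue x h y : agree (glue x h) y = agree x y.
Proof.
by apply: eq_forallb => j; case: (boolP (j \in S)) => //= jS; rewrite glue_out.
Qed.

Lemma agree_glue_id x h : agree x (glue x h).
Proof. by apply/forallP => j; apply/implyP => jS; rewrite glue_out. Qed.

Lemma agreeC x y : agree x y = agree y x.
Proof. by apply: eq_forallb => j; rewrite eq_sym. Qed.

Lemma lift_op_projector P : is_projector P -> is_projector (@lift_op C d k S P).
Proof.
case=> herm idem; split=> x y.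
  by rewrite /lift_op rmorphM /= rmorph_nat -herm -/(agree x y) agreeC.
rewrite /lift_op -/(agree x y).
transitivity (\sum_(c | agree x c) P (restr S x) (restr S c) *
    (P (restr S c) (restr S y) * (agree c y)%:R)).
  rewrite [RHS]big_mkcond; apply: eq_bigr => c _; rewrite -/(agree x c).
  by case: (agree x c); rewrite ?mulr1 ?mulr0 ?mul0r // mulrA.
rewrite (reindex_onto (glue x) (restr S)) /=; last by move=> c; apply: glue_restr.
rewrite (eq_bigl predT); last by move=> h; rewrite agree_glue_id restr_glue eqxx.
under eq_bigr do rewrite restr_glue agree_glue mulrA.
by rewrite -mulr_suml idem.
Qed.

End LiftedProjector.

Section SchmidtCut.
Variables (C : numClosedFieldType) (d m : nat).
Implicit Types (a b : 'I_d) (t s : conf d m) (x : conf d m.+1).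

Definition consc a t : conf d m.+1 :=
  [ffun j => if unlift ord0 j is Some j' then t j' else a].

Definition tensorv (f : 'I_d -> C) (g : conf d m -> C) x : C :=
  f (x ord0) * g (tailc x).

Lemma consc0 a t : consc a t ord0 = a.
Proof. by rewrite ffunE unlift_none. Qed.

Lemma conscS a t j : consc a t (lift ord0 j) = t j.
Proof. by rewrite ffunE liftK. Qed.

Lemma tailc_consc a t : tailc (consc a t) = t.
Proof. by apply/ffunP => j; rewrite ffunE conscS. Qed.

Lemma consc_tailc x : consc (x ord0) (tailc x) = x.
Proof.
apply/ffunP => j; case: (unliftP ord0 j) => [j' ->|->]; last by rewrite consc0.
by rewrite conscS ffunE.
Qed.

Lemma tensorv_consc f g a t : tensorv f g (consc a t) = f a * g t.
Proof. by rewrite /tensorv consc0 tailc_consc. Qed.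

Lemma sum_consc (F : conf d m.+1 -> C) : \sum_x F x = \sum_a \sum_t F (consc a t).
Proof.
rewrite pair_bigA (reindex (fun p : 'I_d * conf d m => consc p.1 p.2)) //=.
exists (fun x => (x ord0, tailc x)) => [[a t] _|x _] /=.
  by rewrite consc0 tailc_consc.
by rewrite consc_tailc.
Qed.

Lemma trace_prod_consc (Q A : conf d m.+1 -> conf d m.+1 -> C) :
  trace_prod Q A = \sum_a \sum_t \sum_b \sum_s
    Q (consc a t) (consc b s) * A (consc b s) (consc a t).
Proof.
rewrite /trace_prod sum_consc.
by apply: eq_bigr => a _; apply: eq_bigr => t _; rewrite sum_consc.
Qed.

Variable S : {set 'I_m.+1}.

Lemma agree_consc a b t s : agree S (consc a t) (consc b s) =
  ((ord0 \in S) || (a == b)) && [forall j, (lift ord0 j \notin S) ==> (t j == s j)].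
Proof.
apply/forallP/andP => [eq_out | [eq0 /forallP eq_tail] j].
  split; first by move: (eq_out ord0); rewrite !consc0; case: (ord0 \in S).
  by apply/forallP => j; move: (eq_out (lift ord0 j)); rewrite !conscS.
case: (unliftP ord0 j) => [j' ->|->]; first by rewrite !conscS.
by rewrite !consc0; case: (ord0 \in S) eq0.
Qed.

Variable P : {ffun {i : 'I_m.+1 | i \in S} -> 'I_d} ->
             {ffun {i : 'I_m.+1 | i \in S} -> 'I_d} -> C.

Lemma lift_opE (x y : conf d m.+1) :
  lift_op P x y = P (restr S x) (restr S y) * (agree S x y)%:R.
Proof. by []. Qed.

Lemma lift_op_consc_out0 c a b t s : ord0 \notin S ->
  lift_op P (consc a t) (consc b s) = (a == b)%:R * lift_op P (consc c t) (consc c s).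
Proof.
move=> S0; have restr_eq a' t' : restr S (consc a' t') = restr S (consc c t').
  apply/ffunP => j; rewrite !ffunE; move: (val j) (valP j) => i.
  by case: (unliftP ord0 i) => [j' ->|->]; rewrite ?conscS // (negbTE S0).
rewrite !lift_opE !agree_consc (negbTE S0) eqxx (restr_eq a) (restr_eq b) /=.
by rewrite -mulnb natrM mulrCA.
Qed.

Lemma lift_op_consc_head t0 a b t s : S \subset [set ord0] ->
  lift_op P (consc a t) (consc b s) = (t == s)%:R * lift_op P (consc a t0) (consc b t0).
Proof.
move=> /subsetP S1; have restr_eq a' t' : restr S (consc a' t') = restr S (consc a' t0).
  apply/ffunP => j; rewrite !ffunE.
  by have /set1P -> := S1 _ (valP j); rewrite !unlift_none.
have tail_out j : lift ord0 j \notin S.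
  by apply/negP => /S1; rewrite inE eq_sym (negbTE (neq_lift _ _)).
have agree_tail t' s' : [forall j, (lift ord0 j \notin S) ==> (t' j == s' j)] = (t' == s').
  apply/forallP/eqP => [eq_tail|-> j]; last by rewrite eqxx implybT.
  by apply/ffunP => j; apply/eqP; apply: (implyP (eq_tail j) (tail_out j)).
rewrite !lift_opE !agree_consc !agree_tail eqxx andbT (restr_eq a) (restr_eq b).
by rewrite andbC -mulnb natrM mulrCA.
Qed.

Lemma trace_tensorv_out0 (f f' : 'I_d -> C) (g g' : conf d m -> C) :
  ord0 \notin S -> \sum_a f a * Num.conj (f' a) = 0 ->
  trace_prod (lift_op P) (outer (tensorv f g) (tensorv f' g')) = 0.
Proof.
move=> S0 ff'; rewrite trace_prod_consc.
case: (pickP (@predT 'I_d)) => [c _|no_digit]; last by rewrite big_pred0.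
pose K t s := lift_op P (consc c t) (consc c s) * (g s * Num.conj (g' t)).
transitivity (\sum_a f a * Num.conj (f' a) * \sum_t \sum_s K t s).
  apply: eq_bigr => a _; rewrite mulr_sumr; apply: eq_bigr => t _.
  transitivity (\sum_b (a == b)%:R * \sum_s lift_op P (consc c t) (consc c s) *
      (f b * g s * Num.conj (f' a * g' t))).
    apply: eq_bigr => b _; rewrite mulr_sumr; apply: eq_bigr => s _.
    by rewrite (lift_op_consc_out0 c) // /outer !tensorv_consc -mulrA.
  rewrite sumr_delta mulr_sumr; apply: eq_bigr => s _.
  by rewrite /K rmorphM /=; ring.
by rewrite -mulr_suml ff' mul0r.
Qed.

Lemma trace_tensorv_head (f f' : 'I_d -> C) (g g' : conf d m -> C) :
  S \subset [set ord0] -> \sum_t g t * Num.conj (g' t) = 0 ->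
  trace_prod (lift_op P) (outer (tensorv f g) (tensorv f' g')) = 0.
Proof.
move=> S1 gg'; rewrite trace_prod_consc.
case: (pickP (@predT (conf d m))) => [t0 _|no_conf]; last first.
  by apply: big1 => a _; rewrite big_pred0.
pose L a b := lift_op P (consc a t0) (consc b t0) * (f b * Num.conj (f' a)).
transitivity (\sum_a \sum_b L a b * \sum_t g t * Num.conj (g' t)).
  apply: eq_bigr => a _.
  transitivity (\sum_t \sum_b L a b * (g t * Num.conj (g' t))); last first.
    by rewrite exchange_big; apply: eq_bigr => b _; rewrite mulr_sumr.
  apply: eq_bigr => t _; apply: eq_bigr => b _.
  transitivity (\sum_s (t == s)%:R * (lift_op P (consc a t0) (consc b t0) *
      (f b * g s * Num.conj (f' a * g' t)))).
    by apply: eq_bigr => s _; rewrite (lift_op_consc_head t0) // /outer !tensorv_consc -mulrA.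
  by rewrite sumr_delta /L rmorphM /=; ring.
by rewrite gg'; apply: big1 => a _; apply: big1 => b _; rewrite mulr0.
Qed.

End SchmidtCut.

Unset Implicit Arguments. Set Strict Implicit.

Theorem lemma1 (C : numClosedFieldType) (d m : nat) (hm : (1 <= m)%N)
  (psi : conf d m.+1 -> C)
  (hpsi : \sum_(x : conf d m.+1) psi x * Num.conj (psi x) = 1)
  (alpha : 'I_d -> C) (w : 'I_d -> 'I_d -> C) (v : 'I_d -> conf d m -> C)
  (halpha : forall i, 0 <= alpha i)
  (hw : orthonormal_fam w) (hv : orthonormal_fam v)
  (hschmidt : forall x : conf d m.+1,
      psi x = \sum_(i : 'I_d) alpha i * w i (x ord0) * v i (tailc x))
  (S : {set 'I_m.+1})
  (P : {ffun {i : 'I_m.+1 | i \in S} -> 'I_d} ->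
       {ffun {i : 'I_m.+1 | i \in S} -> 'I_d} -> C)
  (hP : is_projector P) :
  let Pi := lift_op P in
  let rho := rho_of alpha w v in
  (((ord0 \in S) && [exists j, (j \in S) && (j != ord0)]) ->
     (d%:R)^-1 * trace_prod Pi (ketbra psi) <= trace_prod Pi rho) /\
  (~~ ((ord0 \in S) && [exists j, (j \in S) && (j != ord0)]) ->
     trace_prod Pi rho = trace_prod Pi (ketbra psi)).
Proof.
move=> Pi rho; pose u i := tensorv (fun a => alpha i * w i a) (v i).
have Pi_proj : is_projector Pi by apply: lift_op_projector.
have tr_psi : trace_prod Pi (ketbra psi) = trace_prod Pi (ketbra (fun x => \sum_i u i x)).
  by apply: eq_trace_prod => x y; rewrite /ketbra !hschmidt.
have tr_rho : trace_prod Pi rho = \sum_i trace_prod Pi (ketbra (u i)).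
  rewrite -trace_prod_sumr; apply: eq_trace_prod => x y; apply: eq_bigr => i _.
  by rewrite /ketbra /u /tensorv !rmorphM /= (geC0_conj (halpha i)); ring.
split=> [_ | noncross].
  have rho_ge0 : 0 <= trace_prod Pi rho.
    by rewrite tr_rho; apply: sumr_ge0 => i _; apply: trace_ketbra_ge0.
  have := trace_ketbra_sum_le u Pi_proj; rewrite card_ord -tr_psi -tr_rho.
  case: (posnP d) => [d0 _ | d_gt0]; last by rewrite ler_pdivrMl ?ltr0n.
  have -> : d%:R = 0 :> C by rewrite d0.
  by rewrite invr0 mul0r.
have off_diag i j : i != j -> trace_prod Pi (outer (u i) (u j)) = 0.
  move=> ij; move: noncross; rewrite negb_and => /orP[S0 | no_tail].
    apply: trace_tensorv_out0 => //.
    under eq_bigr do rewrite rmorphM mulrACA.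
    by rewrite -mulr_sumr hw (negbTE ij) mulr0.
  apply: trace_tensorv_head; last by rewrite hv (negbTE ij).
  apply/subsetP => k kS; rewrite inE; move: no_tail; apply: contraR => k_neq0.
  by apply/existsP; exists k; rewrite kS.
rewrite tr_rho tr_psi trace_ketbra_sum; apply: eq_bigr => i _.
by rewrite (bigD1 i) //= big1 ?addr0 // => j ji; apply: off_diag; rewrite eq_sym.
Qed.
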